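(* Let $U=\begin{bmatrix} a & b\\ c & d\end{bmatrix}$ be any $2\times 2$ unitary matrix. Then every uniform measure on $\mathbb{Z}$ is a stationary measure of the two-state quantum walk defined by $U$, i.e. $\mathcal{M}_{unif}\subseteq \mathcal{M}_s(U)$.
   Context: Two-state discrete-time quantum walk on $\mathbb{Z}$: a state is $\Psi=(\Psi(x))_{x\in\mathbb{Z}}\in(\mathbb{C}^2)^{\mathbb{Z}}$ with $\Psi(x)={}^T[\Psi^L(x),\Psi^R(x)]$ (no summability is required). Write $P=\begin{bmatrix} a & b\\ 0&0\end{bmatrix}$, $Q=\begin{bmatrix} 0&0\\ c&d\end{bmatrix}$, so $U=P+Q$. The evolution operator $U^{(s)}$ on $(\mathbb{C}^2)^{\mathbb{Z}}$ is $(U^{(s)}\Psi)(x)=P\Psi(x+1)+Q\Psi(x-1)$, i.e. $(U^{(s)}\Psi)^L(x)=a\Psi^L(x+1)+b\Psi^R(x+1)$, $(U^{(s)}\Psi)^R(x)=c\Psi^L(x-1)+d\Psi^R(x-1)$. Define $\phi:(\mathbb{C}^2)^{\mathbb{Z}}\to[0,\infty)^{\mathbb{Z}}$ by $\phi(\Psi)(x)=|\Psi^L(x)|^2+|\Psi^R(x)|^2$. The set of stationary measures is $\mathcal{M}_s(U)=\{\mu\in[0,\infty)^{\mathbb{Z}}\setminus\{0\}:\ \exists \Psi_0\in(\mathbb{C}^2)^{\mathbb{Z}}$ with $\phi((U^{(s)})^n\Psi_0)=\mu$ for all $n\ge 0\}$. For $c>0$ the uniform measure $\mu_u^{(c)}$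 is $\mu_u^{(c)}(x)=c$ for all $x\in\mathbb{Z}$, and $\mathcal{M}_{unif}=\{\mu_u^{(c)}:c>0\}$. *)

(* Complex scalars: an arbitrary numClosedFieldType C
   (e.g. the complex numbers); measures take values in the nonnegative
   reals of C. *)
From HB Require Import structures.
From mathcomp Require Import all_boot all_order all_algebra.
Set Implicit Arguments. Unset Strict Implicit. Unset Printing Implicit Defensive.
Import Order.TTheory GRing.Theory Num.Theory.
Local Open Scope ring_scope.

Definition unitary (C : numClosedFieldType) (U : 'M[C]_2) : Prop :=
  U *m (map_mx Num.conj U)^T = 1%:M.

(* states: Psi x = (Psi^L(x), Psi^R(x)), no summability *)
Definition qstate (C : numClosedFieldType) := int -> C * C.

(* (U^(s) Psi)(x) = P Psi(x+1) + Q Psi(x-1), with a = U 0 0, b = U 0 1,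
   c = U 1 0, d = U 1 1 *)
Definition Us (C : numClosedFieldType) (U : 'M[C]_2) (Psi : qstate C)
  : qstate C :=
  fun x =>
    (U 0 0 * (Psi (x + 1)).1 + U 0 1 * (Psi (x + 1)).2,
     U 1 0 * (Psi (x - 1)).1 + U 1 1 * (Psi (x - 1)).2).

Definition phi (C : numClosedFieldType) (Psi : qstate C) : int -> C :=
  fun x => `|(Psi x).1| ^+ 2 + `|(Psi x).2| ^+ 2.

Definition stationary_measure (C : numClosedFieldType) (U : 'M[C]_2)
  (mu : int -> C) : Prop :=
  (forall x, 0 <= mu x) /\ (exists x, mu x != 0) /\
  exists Psi0 : qstate C, forall n : nat, phi (iter n (Us U) Psi0) = mu.

Definition unif_measure (C : numClosedFieldType) (c : C) : int -> C :=
  fun _ => c.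

Definition is_uniform (C : numClosedFieldType) (mu : int -> C) : Prop :=
  exists c : C, 0 < c /\ mu = unif_measure c.

(* A spatially constant state is mapped by U^(s) to the constant state whose
   value is the coin U applied to the old value, and the coin is an isometry
   of C^2 because U is unitary.  Hence the constant state with value
   (sqrt c, 0) has measure identically c at every time. *)

From HB Require Import structures.
From mathcomp Require Import all_boot all_order all_algebra.
From mathcomp Require Import sesquilinear spectral.
Set Implicit Arguments. Unset Strict Implicit. Unset Printing Implicit Defensive.
Import Order.TTheory GRing.Theory Num.Theory.
Local Open Scope ring_scope.
Local Open Scope sesquilinear_scope.

Section UnitaryIsometry.
Variables (C : numClosedFieldType) (n : nat).

Lemma sum_sqr_norm_cV (v : 'cV[C]_n) : \sum_i `|v i 0| ^+ 2 = (v ^t* *m v) 0 0.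
Proof. by rewrite mxE; apply: eq_bigr => i _; rewrite !mxE normCK mulrC. Qed.

Lemma unitarymx_isometry (U : 'M[C]_n) (v : 'cV[C]_n) :
  U \is unitarymx -> \sum_i `|(U *m v) i 0| ^+ 2 = \sum_i `|v i 0| ^+ 2.
Proof.
move=> /unitarymxP /mulmx1C UtU.
by rewrite !sum_sqr_norm_cV trmx_mul map_mxM -mulmxA (mulmxA _ U) UtU mul1mx.
Qed.

End UnitaryIsometry.

Section ConstantStates.
Variables (C : numClosedFieldType) (U : 'M[C]_2).

Lemma unitaryP : unitary U -> U \is unitarymx.
Proof. by move=> UU; apply/unitarymxP; rewrite -map_trmx. Qed.

Definition coin (w : C * C) : C * C :=
  (U 0 0 * w.1 + U 0 1 * w.2, U 1 0 * w.1 + U 1 1 * w.2).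

Definition sqr_norm_pair (w : C * C) : C := `|w.1| ^+ 2 + `|w.2| ^+ 2.

Lemma iter_Us_const k (w : C * C) :
  iter k (Us U) (fun _ => w) = (fun _ => iter k coin w).
Proof. by elim: k => //= k ->. Qed.

Lemma phi_const (w : C * C) : phi (fun _ : int => w) = (fun _ => sqr_norm_pair w).
Proof. by []. Qed.

Lemma coin_isometry (w : C * C) :
  unitary U -> sqr_norm_pair (coin w) = sqr_norm_pair w.
Proof.
have lift01 : lift ord0 ord0 = 1 :> 'I_2 by apply: val_inj.
move=> /unitaryP /(@unitarymx_isometry _ _ U (\col_i [:: w.1; w.2]`_i)).
by rewrite !big_ord_recl !big_ord0 !mxE !big_ord_recl !big_ord0 !mxE !addr0 lift01.
Qed.

Lemma iter_coin_isometry k (w : C * C) :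
  unitary U -> sqr_norm_pair (iter k coin w) = sqr_norm_pair w.
Proof. by move=> UU; elim: k => //= k <-; rewrite coin_isometry. Qed.

End ConstantStates.

Theorem theorem1 (C : numClosedFieldType) (U : 'M[C]_2) :
  unitary U ->
  forall mu : int -> C, is_uniform mu -> stationary_measure U mu.
Proof.
move=> UU mu [c [c_gt0 ->]].
split; first by move=> x; rewrite ltW.
split; first by exists 0; rewrite gt_eqF.
exists (fun _ => (sqrtC c, 0)) => k.
rewrite iter_Us_const phi_const iter_coin_isometry //.
by rewrite /sqr_norm_pair normr0 expr0n addr0 -normrX sqrtCK gtr0_norm.
Qed.
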